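(* Let $\mathcal G=(\mathcal V,\mathcal E,W)$ be a network, $h\in\mathbb{R}^{\mathcal V}$, and consider the SNC game with binary actions on $\mathcal G$ with external field $h$. Then: (i) the game is super-modular if and only if $\mathcal G$ is unsigned; (ii) if $\mathcal G$ is unsigned, then the set $\mathcal N$ of Nash equilibria is globally BR-reachable.
   Context: A network is a triple $\mathcal G=(\mathcal V,\mathcal E,W)$ where $\mathcal V$ is a finite nonempty set, $\mathcal E\subseteq\mathcal V\times\mathcal V$, and $W\in\mathbb{R}^{\mathcal V\times\mathcal V}$ has zero diagonal and satisfies $W_{ij}\neq0$ iff $(i,j)\in\mathcal E$ (weights may have either sign). It is unsigned if $W_{ij}\ge0$ for all $i,j$. The SNC game with binary actions on $\mathcal G$ with external field $h\in\mathbb{R}^{\mathcal V}$ has player set $\mathcal V$, action set $\{-1,+1\}$ for each player, strategy profiles $\mathcal X=\{\pm1\}^{\mathcal V}$, and utilities $u_i(x)=h_ix_i+x_i\sum_{j\in\mathcal V}W_{ij}x_j$. A game with binary actions $\{\pm1\}$ is super-modular if $u_i(+1,x_{-i})-u_i(-1,x_{-i})\le u_i(+1,y_{-i})-u_i(-1,y_{-i})$ for every player $i$ and all profiles $x\le y$ (entrywise). Best responses $\mathcal B_i(x_{-i})=\arg\max_{x_i\in\{\pm1\}}u_i(x_i,x_{-i})$; Nash equilibrium: $x^*_i\in\mathcal B_i(x^*_{-i})$ for all $i$. A BR-path of length $l\ge0$ from $x$ to $y$ is a sequence $x^{(0)}=x,\dots,x^{(l)}=y$ such that for each $k$ some player $i_k$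 has $x^{(k)}_{-i_k}=x^{(k-1)}_{-i_k}$ and $x^{(k)}_{i_k}\in\mathcal B_{i_k}(x^{(k-1)}_{-i_k})\setminus\{x^{(k-1)}_{i_k}\}$. A set $\mathcal X^*\subseteq\mathcal X$ is globally BR-reachable if from every profile there is a BR-path to some element of $\mathcal X^*$. *)

From HB Require Import structures.
From mathcomp Require Import all_boot all_order all_algebra.
Set Implicit Arguments. Unset Strict Implicit. Unset Printing Implicit Defensive.
Import Order.TTheory GRing.Theory Num.Theory.
Local Open Scope ring_scope.

Section SNC.
Variables (R : realFieldType) (V : finType).

(* Binary action: true encodes +1, false encodes -1. *)
Definition act (b : bool) : R := if b then 1 else -1.

Definition profile := {ffun V -> bool}.

Definition upd (x : profile) (i : V) (a : bool) : profile :=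
  [ffun j => if j == i then a else x j].

(* Entrywise order on profiles (-1 < +1, i.e. false < true). *)
Definition prof_le (x y : profile) : Prop := forall j, x j ==> y j.

Variables (W : V -> V -> R) (h : V -> R).

Definition utility (i : V) (x : profile) : R :=
  h i * act (x i) + act (x i) * \sum_(j : V) W i j * act (x j).

Definition supermodular : Prop :=
  forall (i : V) (x y : profile), prof_le x y ->
    utility i (upd x i true) - utility i (upd x i false)
    <= utility i (upd y i true) - utility i (upd y i false).

Definition best_response (i : V) (x : profile) (a : bool) : Prop :=
  forall b : bool, utility i (upd x i b) <= utility i (upd x i a).

Definition nash (x : profile) : Prop :=
  forall i, best_response i x (x i).

Definition br_step (x y : profile) : Prop :=
  exists i : V, (forall j, j != i -> y j = x j) /\
                best_response i x (y i) /\ y i != x i.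

Definition br_path (x y : profile) : Prop :=
  exists (l : nat) (s : nat -> profile),
    s 0%N = x /\ s l = y /\
    forall k : nat, (0 < k <= l)%N -> br_step (s k.-1) (s k).

Definition globally_br_reachable (S : profile -> Prop) : Prop :=
  forall x : profile, exists y : profile, S y /\ br_path x y.

End SNC.

Definition unsigned (R : realFieldType) (V : finType) (W : V -> V -> R) : Prop :=
  forall i j, 0 <= W i j.
Arguments globally_br_reachable [R V] W h S.
Arguments br_path [R V] W h x y.

From HB Require Import structures.
From mathcomp Require Import all_boot all_order all_algebra.
From mathcomp Require Import lra zify.
Import Order.TTheory GRing.Theory Num.Theory.
Local Open Scope ring_scope.

(* Since W has zero diagonal, u_i(a, x_{-i}) = a D_i(x) with the local field
   D_i(x) = h_i + sum_j W_ij x_j independent of x_i.  The gain of switching to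
   +1 is 2 D_i(x), which is nondecreasing in x iff W >= 0.
   For (ii), first let -1 players with D_i > 0 switch to +1 until every -1
   player best-responds; then let +1 players with D_i < 0 switch to -1.  With
   W >= 0 a downward switch lowers every D_j, so the -1 players keep
   best-responding, and each phase ends because it moves monotonically. *)

Section BRPaths.
Variables (R : realFieldType) (V : finType) (W : V -> V -> R) (h : V -> R).

Lemma br_path_refl (x : profile V) : br_path W h x x.
Proof. by exists 0%N, (fun _ => x); do 2!split => //; case. Qed.

Lemma br_step_path (x y : profile V) : br_step W h x y -> br_path W h x y.
Proof.
by exists 1%N, (fun k => if k is 0%N then x else y); do 2!split => //; case=> [|[]].
Qed.

Lemma br_path_trans (x y z : profile V) :
  br_path W h x y -> br_path W h y z -> br_path W h x z.
Proof.
move=> [l1 [s1 [s10 [s1l s1S]]]] [l2 [s2 [s20 [s2l s2S]]]].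
pose s k := if (k <= l1)%N then s1 k else s2 (k - l1)%N.
have s_right k : (l1 <= k)%N -> s k = s2 (k - l1)%N.
  rewrite /s leq_eqVlt => /orP[/eqP <-|lt_l1_k]; first by rewrite leqnn subnn s1l s20.
  by rewrite leqNgt lt_l1_k.
exists (l1 + l2)%N, s; split; first by rewrite /s leq0n.
split; first by rewrite s_right ?leq_addr // addKn.
move=> k /andP[k_gt0 le_k]; have [le_k_l1|lt_l1_k] := leqP k l1.
  by rewrite /s le_k_l1 (leq_trans (leq_pred k) le_k_l1); apply: s1S; rewrite k_gt0.
rewrite !s_right; [|lia|lia].
have -> : (k.-1 - l1 = (k - l1).-1)%N by lia.
by apply: s2S; lia.
Qed.

Lemma br_path_descent (I Q : profile V -> Prop) (m : profile V -> nat) :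
  (forall x, I x -> Q x \/ exists y, [/\ br_step W h x y, I y & (m y < m x)%N]) ->
  forall x, I x -> exists2 z, Q z & br_path W h x z.
Proof.
move=> step x; have [n] := ubnP (m x); elim: n x => // n IH x lt_mx_n Ix.
have [Qx | [y [xy Iy lt_my_mx]]] := step x Ix.
  by exists x => //; apply: br_path_refl.
have [|z Qz yz] := IH y _ Iy; first exact: leq_trans lt_my_mx _.
by exists z => //; apply: br_path_trans yz; apply: br_step_path.
Qed.

Lemma card_upd_lt (x : profile V) (i : V) (a : bool) : x i != a ->
  (#|[set j | upd x i a j != a]| < #|[set j | x j != a]|)%N.
Proof.
move=> xi_a; apply: proper_card; apply/properP; split.
  by apply/subsetP => j; rewrite !inE ffunE; case: ifP => // _; rewrite eqxx.
by exists i; rewrite !inE ?ffunE ?eqxx.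
Qed.

End BRPaths.

Section SNCGame.
Variables (R : realFieldType) (V : finType) (W : V -> V -> R) (h : V -> R).
Hypothesis W_diag : forall i : V, W i i = 0.

Definition local_field (i : V) (x : profile V) : R :=
  h i + \sum_(j : V) W i j * act R (x j).

Lemma local_field_upd_self (i : V) (x : profile V) (a : bool) :
  local_field i (upd x i a) = local_field i x.
Proof.
congr (_ + _); apply: eq_bigr => j _; rewrite ffunE.
by case: eqP => [->|//]; rewrite W_diag !mul0r.
Qed.

Lemma utility_upd (i : V) (x : profile V) (a : bool) :
  utility W h i (upd x i a) = act R a * local_field i x.
Proof.
by rewrite -(local_field_upd_self i x a) /utility ffunE eqxx mulrDr mulrC.
Qed.

Lemma utility_gain (i : V) (x : profile V) :
  utility W h i (upd x i true) - utility W h i (upd x i false)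
  = 2 * local_field i x.
Proof. by rewrite !utility_upd /act; lra. Qed.

Lemma best_response_true (i : V) (x : profile V) :
  best_response W h i x true <-> 0 <= local_field i x.
Proof.
split=> [/(_ false)|f_ge0 []]; rewrite !utility_upd /act; lra.
Qed.

Lemma best_response_false (i : V) (x : profile V) :
  best_response W h i x false <-> local_field i x <= 0.
Proof.
split=> [/(_ true)|f_le0 []]; rewrite !utility_upd /act; lra.
Qed.

Lemma br_step_upd (x : profile V) (i : V) (a : bool) :
  a != x i -> best_response W h i x a -> br_step W h x (upd x i a).
Proof.
move=> a_new br_a; exists i; split; first by move=> j /negPf ji; rewrite ffunE ji.
by rewrite ffunE eqxx.
Qed.

Lemma local_field_upd (i j : V) (x : profile V) :
  local_field i (upd x j true) = local_field i (upd x j false) + 2 * W i j.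
Proof.
have off_j a : \sum_(k | k != j) W i k * act R (upd x j a k)
               = \sum_(k | k != j) W i k * act R (x k).
  by apply: eq_bigr => k /negPf kj; rewrite ffunE kj.
rewrite /local_field -addrA; congr (_ + _).
rewrite (bigD1 j) //= [X in _ = X + _](bigD1 j) //= !off_j !ffunE eqxx /act; lra.
Qed.

Lemma local_field_homo (i : V) (x y : profile V) :
  unsigned W -> prof_le x y -> local_field i x <= local_field i y.
Proof.
move=> W_ge0 le_xy; rewrite lerD2l; apply: ler_sum => j _.
apply: ler_wpM2l; first exact: W_ge0.
by have := le_xy j; case: (x j); case: (y j); rewrite /act //= => _; lra.
Qed.

Lemma supermodular_unsigned : supermodular W h <-> unsigned W.
Proof.
split=> [sm i j | W_ge0 i x y le_xy]; last first.
  by rewrite !utility_gain ler_pM2l ?local_field_homo.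
pose x0 : profile V := [ffun => false].
have le_ud : prof_le (upd x0 j false) (upd x0 j true).
  by move=> k; rewrite !ffunE; case: eqP.
by have := sm i _ _ le_ud; rewrite !utility_gain local_field_upd; lra.
Qed.

Hypothesis W_ge0 : unsigned W.

Definition minus_players_best_respond (x : profile V) : Prop :=
  forall i, ~~ x i -> local_field i x <= 0.

Lemma reach_minus_players_best_respond (x : profile V) :
  exists2 z, minus_players_best_respond z & br_path W h x z.
Proof.
apply: (@br_path_descent _ _ W h (fun=> True) _
          (fun x => #|[set j | x j != true]|)) => // {}x _.
case: (pickP (fun i => ~~ x i && (0 < local_field i x))) => [i /andP[xi f_gt0]|none].
  right; exists (upd x i true); split => //.
    by apply: br_step_upd; [rewrite (negPf xi) | apply/best_response_true/ltW].
  by apply: card_upd_lt; rewrite (negPf xi).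
by left => i xi; have := none i; rewrite xi /= leNgt => ->.
Qed.

Lemma reach_nash_from_minus_players_best_respond (x : profile V) :
  minus_players_best_respond x -> exists2 z, nash W h z & br_path W h x z.
Proof.
apply: (@br_path_descent _ _ W h _ _ (fun x => #|[set j | x j != false]|)).
move=> {}x inv_x.
case: (pickP (fun i => x i && (local_field i x < 0))) => [i /andP[xi f_lt0]|none].
  right; exists (upd x i false); split; last by apply: card_upd_lt; rewrite xi.
  - by apply: br_step_upd; [rewrite xi | apply/best_response_false/ltW].
  - move=> j; rewrite ffunE; case: eqP => [-> _ | _ xj].
      by rewrite local_field_upd_self ltW.
    apply: le_trans (inv_x j xj); apply: local_field_homo => // k.
    by rewrite ffunE; case: eqP => // _; case: (x k).
left=> i; case xi: (x i).
  by apply/best_response_true; have := none i; rewrite xi /= leNgt => ->.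
by apply/best_response_false/inv_x; rewrite xi.
Qed.

Lemma nash_globally_br_reachable : globally_br_reachable W h (nash W h).
Proof.
move=> x; have [y inv_y xy] := reach_minus_players_best_respond x.
have [z nash_z yz] := reach_nash_from_minus_players_best_respond y inv_y.
by exists z; split => //; apply: br_path_trans yz.
Qed.

End SNCGame.

Theorem proposition2 (R : realFieldType) (V : finType) (W : V -> V -> R) (h : V -> R)
  (HV : (0 < #|V|)%N) (Wdiag : forall i : V, W i i = 0) :
  (supermodular W h <-> unsigned W) /\
  (unsigned W -> globally_br_reachable W h (nash W h)).
Proof.
split; first exact: supermodular_unsigned.
exact: nash_globally_br_reachable.
Qed.
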